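(* Let $A$ be a commutative algebra over a field with multiplication $\star$ satisfying the Tortken identity $$(a\star b)\star(c\star d)-(a\star d)\star(c\star b)=(a,b,c)\star d-(a,d,c)\star b\quad\text{for all }a,b,c,d\in A.$$ Then for all $a,b,c,x\in A$: $(a,x,b)\star c+(b,x,c)\star a+(c,x,a)\star b=0$.
   Context: The associator is $(a,b,c)=a\star(b\star c)-(a\star b)\star c$. *)

From mathcomp Require Import all_boot all_order all_algebra.
Set Implicit Arguments. Unset Strict Implicit. Unset Printing Implicit Defensive.
Import GRing.Theory.
Local Open Scope ring_scope.

Definition bilinear_mul (K : fieldType) (V : lmodType K) (mul : V -> V -> V) : Prop :=
  (forall k a b c, mul (k *: a + b) c = k *: mul a c + mul b c) /\
  (forall k a b c, mul a (k *: b + c) = k *: mul a b + mul a c).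

Definition commutative_mul (V : Type) (mul : V -> V -> V) : Prop :=
  forall a b, mul a b = mul b a.

Definition assoc (K : fieldType) (V : lmodType K) (mul : V -> V -> V) (a b c : V) : V :=
  mul a (mul b c) - mul (mul a b) c.

Definition tortken (K : fieldType) (V : lmodType K) (mul : V -> V -> V) : Prop :=
  forall a b c d : V,
    mul (mul a b) (mul c d) - mul (mul a d) (mul c b)
    = mul (assoc mul a b c) d - mul (assoc mul a d c) b.

From mathcomp Require Import all_boot all_order all_algebra.
Local Open Scope ring_scope.
Import GRing.Theory.

(* Instantiate the Tortken identity at (a, x, b, c), (b, x, c, a) and (c, x, a, b)
   and add.  By commutativity the left-hand sides telescope to 0, and the
   right-hand sides add up to the claimed cyclic sum minus
   ((a,c,b) + (b,a,c) + (c,b,a)) * x, whose first factor vanishes in any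
   commutative algebra. *)

Lemma subr_cycle0 (V : zmodType) (p q r : V) : p - q + (q - r) + (r - p) = 0.
Proof. by rewrite subrKA subrKA subrr. Qed.

Lemma addr3ACA (V : nmodType) (x1 y1 x2 y2 x3 y3 : V) :
  x1 + y1 + (x2 + y2) + (x3 + y3) = x1 + x2 + x3 + (y1 + y2 + y3).
Proof. by rewrite (addrACA x1) (addrACA (x1 + x2)). Qed.

Lemma bilinear_mulDl (K : fieldType) (V : lmodType K) (mul : V -> V -> V) :
  bilinear_mul mul -> forall u v w, mul (u + v) w = mul u w + mul v w.
Proof. by case=> mulZDl _ u v w; rewrite -[u]scale1r mulZDl !scale1r. Qed.

Section CommutativeAlgebra.

Variables (K : fieldType) (V : lmodType K) (mul : V -> V -> V).
Hypothesis mulC : commutative_mul mul.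

Local Notation "a ⋆ b" := (mul a b) (at level 40, left associativity).

Lemma assoc_cycle_sum0 (a b c : V) :
  assoc mul a c b + assoc mul b a c + assoc mul c b a = 0.
Proof.
rewrite /assoc (mulC c b) (mulC a c) (mulC b a).
rewrite (mulC a (b ⋆ c)) (mulC b (c ⋆ a)) (mulC c (a ⋆ b)).
exact: subr_cycle0.
Qed.

Lemma tortken_cycle_sum0 (a b c x : V) :
  (a ⋆ x) ⋆ (b ⋆ c) - (a ⋆ c) ⋆ (b ⋆ x)
  + ((b ⋆ x) ⋆ (c ⋆ a) - (b ⋆ a) ⋆ (c ⋆ x))
  + ((c ⋆ x) ⋆ (a ⋆ b) - (c ⋆ b) ⋆ (a ⋆ x)) = 0.
Proof.
rewrite (mulC (a ⋆ c)) (mulC (b ⋆ a)) (mulC (c ⋆ b)).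
rewrite (mulC a c) (mulC b a) (mulC c b).
exact: subr_cycle0.
Qed.

Hypothesis mulDl : forall u v w, (u + v) ⋆ w = u ⋆ w + v ⋆ w.

Lemma mul0l (w : V) : 0 ⋆ w = 0.
Proof. by apply: (addrI (0 ⋆ w)); rewrite -mulDl !addr0. Qed.

Lemma assoc_cycle_sum0_mull (a b c x : V) :
  assoc mul a c b ⋆ x + assoc mul b a c ⋆ x + assoc mul c b a ⋆ x = 0.
Proof. by rewrite -!mulDl assoc_cycle_sum0 mul0l. Qed.

End CommutativeAlgebra.

Theorem mainTheorem6 (K : fieldType) (V : lmodType K) (mul : V -> V -> V)
  (Hbil : bilinear_mul mul) (Hcomm : commutative_mul mul) (Htk : tortken mul) :
  forall a b c x : V,
    mul (assoc mul a x b) c + mul (assoc mul b x c) a + mul (assoc mul c x a) b = 0.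
Proof.
move=> a b c x.
have tortken_solved u v w : mul (assoc mul u x v) w
    = mul (mul u x) (mul v w) - mul (mul u w) (mul v x) + mul (assoc mul u w v) x.
  by rewrite Htk subrK.
rewrite !tortken_solved addr3ACA tortken_cycle_sum0 // add0r.
apply: assoc_cycle_sum0_mull => //.
exact: bilinear_mulDl.
Qed.
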